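(* Let $K$ be any number field. There do not exist finite extensions $L/K$ and $M/K$ with $[L:K]=4$, $t_K(L)=1$ and $\tau_K(M,L)=2$.
   Context: Extensions lie in a fixed algebraic closure. For $L/K$ with Galois closure $\tilde L$, $G=\mathrm{Gal}(\tilde L/K)$, $H=\mathrm{Gal}(\tilde L/L)$, the ascending index is $t_K(L)=[G:H^G]$ where $H^G$ is the normal closure of $H$ in $G$ (the degree of the largest subextension of $L/K$ Galois over $K$). For $M/K$, if $L_1,\dots,L_a$ are all the distinct subfields of $M$ isomorphic to $L$ over $K$, then $\tau_K(M,L)=[L_1\cap\cdots\cap L_a:K]$ if $a\ge1$ and $\tau_K(M,L)=0$ if $a=0$. *)

From HB Require Import structures.
From mathcomp Require Import all_boot all_order all_algebra all_fingroup all_solvable all_field.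
Set Implicit Arguments. Unset Strict Implicit. Unset Printing Implicit Defensive.
Import GRing.Theory.

Section Defs.
Variable E : splittingFieldType rat.

(* Ascending index t_K(L) = [G : H^G], G = Gal(E/K), H = Gal(E/L),
   H^G = normal closure of H in G (E may replace the
   Galois closure of L/K without changing the index). *)
Definition ascending_index (K L : {subfield E}) : nat :=
  #|'Gal(fullv / K) : <<class_support 'Gal(fullv / L) 'Gal(fullv / K)>>|%g.

Definition iso_over (K L L' : {subfield E}) : Prop :=
  exists f : 'End(E), kHom K L f /\ (f @: L)%VS = L'.

Definition copy_in (K M L L' : {subfield E}) : Prop :=
  (L' <= M)%VS /\ iso_over K L L'.

Definition tau_is (K M L : {subfield E}) (d : nat) : Prop :=
  ((~ exists L', copy_in K M L L') /\ d = 0%N) \/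
  ((exists L', copy_in K M L L') /\
   exists I : {subfield E},
     (forall x : E, x \in I <-> (forall L', copy_in K M L L' -> x \in L')) /\
     d = \dim_K I).
End Defs.

(** Intersecting the copies of L inside M gives a field I with [I : K] = 2
    lying in a K-conjugate s(L) of L.  Since Gal(E/I) has index 2 it is normal
    in Gal(E/K), so it contains the conjugate Gal(E/L) of Gal(E/s(L)), hence the
    normal closure of Gal(E/L).  Ascending index 1 says that this normal closure
    is all of Gal(E/K), which contradicts [Gal(E/K) : Gal(E/I)] = 2. *)

From HB Require Import structures.
From mathcomp Require Import all_boot all_order all_algebra all_fingroup all_solvable all_field.

Set Implicit Arguments.
Unset Strict Implicit.
Unset Printing Implicit Defensive.

Import GRing.Theory.
Local Open Scope group_scope.

Lemma normal_closure_index1_sub (gT : finGroupType) (H N G : {group gT}) :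
  H \subset N -> G \subset 'N(N) -> #|G : <<class_support H G>>| = 1%N ->
  G \subset N.
Proof.
move=> sHN nNG /eqP; rewrite indexg_eq1 => /subset_trans; apply.
by rewrite gen_subG class_support_sub_norm.
Qed.

Section GaloisTower.

Variables (F : fieldType) (E : splittingFieldType F).
Implicit Types K L I : {subfield E}.

Lemma index_gal_fullv K I :
  galois K fullv -> (K <= I)%VS ->
  #|'Gal(fullv / K) : 'Gal(fullv / I)| = \dim_K I.
Proof.
move=> galK sKI; have galI : galois I fullv by apply: galoisS galK; rewrite sKI subvf.
apply/eqP; rewrite -(eqn_pmul2l (cardG_gt0 'Gal(fullv / I))) Lagrange ?galS //.
rewrite -!galois_dim // -(eqn_pmul2r (adim_gt0 K)) -dim_sup_field ?subvf //.
by rewrite -mulnA -(dim_sup_field sKI) -dim_sup_field ?subvf.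
Qed.

Lemma kHom_img_gal K L (f : 'End(E)) :
  (K <= L)%VS -> kHom K L f ->
  exists2 s, s \in 'Gal(fullv / K) & (f @: L)%VS = (s @: L)%VS.
Proof.
move=> sKL homf; have sKLE : (K <= L <= fullv)%VS by rewrite sKL subvf.
have [s Gs fs] := kHom_to_gal sKLE (normalFieldf K) homf.
by exists s => //; apply: eq_in_limg.
Qed.

Lemma gal_conj_sub_normal K L I s :
  s \in 'Gal(fullv / K) -> (I <= s @: L)%VS ->
  'Gal(fullv / I) <| 'Gal(fullv / K) -> 'Gal(fullv / L) \subset 'Gal(fullv / I).
Proof.
move=> Gs sIsL /normal_norm/normsP nIG.
rewrite -(nIG _ (groupVr Gs)) -sub_conjgV invgK gal_conjg.
exact: galS.
Qed.

End GaloisTower.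

Lemma galois_fullv (F : numFieldType) (E : splittingFieldType F) (K : {subfield E}) :
  galois K fullv.
Proof.
rewrite /galois subvf normalFieldf andbT; apply/separableP => y _.
by apply: pcharf0_separable => p; rewrite (pchar_lalg E) Num.Theory.pchar_num.
Qed.

Section RationalBase.

Variable E : splittingFieldType rat.
Implicit Types K L M I : {subfield E}.

Lemma tau_is_copy_cap K M L d :
  (K <= L)%VS -> tau_is K M L d -> d != 0%N ->
  exists L' I,
    [/\ iso_over K L L', (K <= I)%VS, (I <= L')%VS & \dim_K I = d].
Proof.
move=> sKL [[_ ->] //|[[L0 copyL0] [I [memI dimI]]] _].
exists L0, I; split=> //; first exact: copyL0.2.
- apply/subvP => x Kx; apply/memI => L' [_ [g [homg <-]]].
  have [idKg _] := kHomP_tmp homg.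
  by rewrite -(idKg x Kx) memv_img // (subvP sKL).
- by apply/subvP => x /memI; apply.
Qed.

End RationalBase.

Theorem mainTheorem19 (E : splittingFieldType rat) (K : {subfield E}) :
  ~ exists L M : {subfield E},
      [/\ (K <= L)%VS, (K <= M)%VS, \dim_K L = 4%N,
          ascending_index K L = 1%N & tau_is K M L 2].
Proof.
move=> [L [M [sKL _ _ tL tauL]]].
have [L' [I [[f [homf defL']] sKI sIL' dimI]]] := tau_is_copy_cap sKL tauL isT.
have [s Gs defL] := kHom_img_gal sKL homf.
have idxI : #|'Gal(fullv / K) : 'Gal(fullv / I)| = 2%N.
  by rewrite index_gal_fullv ?galois_fullv.
have nIG := index2_normal (galS fullv sKI) idxI.
have sLI : 'Gal(fullv / L) \subset 'Gal(fullv / I).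
  by apply: gal_conj_sub_normal Gs _ nIG; rewrite -defL defL'.
have := normal_closure_index1_sub sLI (normal_norm nIG) tL.
by rewrite -indexg_eq1 idxI.
Qed.
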